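(* Let $G$ be a locally compact group, $H$ a compact subgroup of $G$, and $X$ a proper $G$-space. (a) If $S$ is a global $H$-slice of $X$ which is a small subset of $X$, then the slicing map $f_S:X\to G/H$ is continuous and open. If in addition $S$ is compact, then $f_S$ is also closed. (b) Conversely, if $f:X\to G/H$ is a continuous equivariant map, then $S=f^{-1}(eH)$ is a global $H$-slice of $X$ which is a small subset of $X$, and $f_S=f$.
   Context: All spaces are completely regular Hausdorff. A $G$-space is a space $X$ with a continuous action $G\times X\to X$, $(g,x)\mapsto gx$, with $ex=x$ and $(gh)x=g(hx)$. A map $f:X\to Y$ between $G$-spaces is equivariant if $f(gx)=gf(x)$. $G/H$ denotes the space of left cosets $xH$ with the quotient topology and action $g(xH)=(gx)H$; $e$ is the unit of $G$. For $S\subset X$, $G(S)=\{gs\mid g\in G,s\in S\}$. For a closed subgroup $H\subset G$, a subset $S\subset X$ is an $H$-slice in $X$ if: (i) $H(S)=S$; (ii) $S$ is closed in $G(S)$; (iii) if $g\in G\setminus H$ then $gS\cap S=\emptyset$; (iv) $G(S)$ is open in $X$. It is a global $H$-slice if moreover $G(S)=X$. For an $H$-slice $S$, the slicing map $f_S:G(S)\to G/H$ is defined by $f_S(gs)=gH$ for $g\in G$, $s\in S$ (well defined by (iii)). For $U,V\subset X$ the transporter is $\langle U,V\rangle=\{g\in G\mid gU\cap V\neq\emptyset\}$; $U$ and $V$ are thin relative to each other if $\langle U,V\rangle$ has compact closure in $G$. A subset $U\subset X$ is small if every point of $X$ has a neighborhood thin relative to $U$. For $G$ locally compact, a $G$-space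 $X$ is proper if every point of $X$ has a small neighborhood. *)

From Stdlib Require Import Reals List ClassicalEpsilon.
Set Implicit Arguments.

Section Topology.
Variable T : Type.
Variable opens : (T -> Prop) -> Prop.

Definition is_topology : Prop :=
  opens (fun _ => True) /\
  (forall U V, opens U -> opens V -> opens (fun x => U x /\ V x)) /\
  (forall (I : Type) (F : I -> T -> Prop),
      (forall i, opens (F i)) -> opens (fun x => exists i, F i x)).

Definition is_closed (A : T -> Prop) : Prop := opens (fun x => ~ A x).

Definition closure (A : T -> Prop) : T -> Prop :=
  fun x => forall U, opens U -> U x -> exists y, U y /\ A y.

Definition nbhd (N : T -> Prop) (x : T) : Prop :=
  exists U, opens U /\ U x /\ forall y, U y -> N y.

Definition is_compact (K : T -> Prop) : Prop :=
  forall (I : Type) (F : I -> T -> Prop),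
    (forall i, opens (F i)) ->
    (forall x, K x -> exists i, F i x) ->
    exists l : list I, forall x, K x -> exists i, In i l /\ F i x.

Definition hausdorff : Prop :=
  forall x y, x <> y ->
    exists U V, opens U /\ opens V /\ U x /\ V y /\ forall z, ~ (U z /\ V z).

Definition R_open (U : R -> Prop) : Prop :=
  forall r, U r -> exists eps, (0 < eps)%R /\ forall s, (Rabs (s - r) < eps)%R -> U s.

Definition completely_regular : Prop :=
  forall (C : T -> Prop) (x : T), is_closed C -> ~ C x ->
    exists f : T -> R,
      (forall U, R_open U -> opens (fun y => U (f y))) /\
      f x = 0%R /\ (forall y, C y -> f y = 1%R).

Definition locally_compact : Prop :=
  forall x, exists K, is_compact K /\ nbhd K x.
End Topology.

Definition continuous {A B : Type} (opA : (A -> Prop) -> Prop) (opB : (B -> Prop) -> Prop)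
  (f : A -> B) : Prop :=
  forall V, opB V -> opA (fun x => V (f x)).

Definition open_map {A B : Type} (opA : (A -> Prop) -> Prop) (opB : (B -> Prop) -> Prop)
  (f : A -> B) : Prop :=
  forall U, opA U -> opB (fun y => exists x, U x /\ f x = y).

Definition closed_map {A B : Type} (opA : (A -> Prop) -> Prop) (opB : (B -> Prop) -> Prop)
  (f : A -> B) : Prop :=
  forall C, is_closed opA C -> is_closed opB (fun y => exists x, C x /\ f x = y).

Definition prod_open {A B : Type} (opA : (A -> Prop) -> Prop) (opB : (B -> Prop) -> Prop)
  (W : A * B -> Prop) : Prop :=
  forall a b, W (a, b) ->
    exists U V, opA U /\ opB V /\ U a /\ V b /\
      forall a' b', U a' -> V b' -> W (a', b').

Definition continuous2 {A B C : Type} (opA : (A -> Prop) -> Prop)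
  (opB : (B -> Prop) -> Prop) (opC : (C -> Prop) -> Prop) (f : A -> B -> C) : Prop :=
  forall W, opC W -> prod_open opA opB (fun p => W (f (fst p) (snd p))).

Record Group (G : Type) := {
  mul : G -> G -> G;
  inv : G -> G;
  one : G;
  mulA : forall x y z, mul x (mul y z) = mul (mul x y) z;
  mul1g : forall x, mul one x = x;
  mulVg : forall x, mul (inv x) x = one
}.

Section GroupStuff.
Variables (G : Type) (gr : Group G) (opG : (G -> Prop) -> Prop).

Definition topological_group : Prop :=
  continuous2 opG opG opG (mul gr) /\ continuous opG opG (inv gr).

Definition subgroup (H : G -> Prop) : Prop :=
  H (one gr) /\ (forall x y, H x -> H y -> H (mul gr x y)) /\
  (forall x, H x -> H (inv gr x)).

Variable H : G -> Prop.

Definition coset (x : G) : G -> Prop := fun y => H (mul gr (inv gr x) y).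

Definition GmodH : Type := { C : G -> Prop | exists x, C = coset x }.

Definition proj (x : G) : GmodH := exist _ (coset x) (ex_intro _ x eq_refl).

Definition quot_open (U : GmodH -> Prop) : Prop := opG (fun g => U (proj g)).

Variables (X : Type) (opX : (X -> Prop) -> Prop) (act : G -> X -> X).

Definition is_action : Prop :=
  continuous2 opG opX opX act /\
  (forall x, act (one gr) x = x) /\
  (forall g h x, act (mul gr g h) x = act g (act h x)).

(* f : X -> G/H is equivariant: f(gx) = g f(x), where g(hH) = (gh)H *)
Definition equivariant (f : X -> GmodH) : Prop :=
  forall g x h, f x = proj h -> f (act g x) = proj (mul gr g h).

Definition saturation (S : X -> Prop) : X -> Prop :=
  fun x => exists g s, S s /\ x = act g s.

Definition H_saturation (S : X -> Prop) : X -> Prop :=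
  fun x => exists h s, H h /\ S s /\ x = act h s.

Definition H_slice (S : X -> Prop) : Prop :=
  (forall x, H_saturation S x <-> S x) /\
  (* (ii) S is closed in G(S) (subspace topology) *)
  (exists C, is_closed opX C /\ forall x, saturation S x -> (S x <-> C x)) /\
  (* (iii) g not in H implies gS and S disjoint *)
  (forall g, ~ H g -> forall s, S s -> ~ S (act g s)) /\
  opX (saturation S).

Definition global_H_slice (S : X -> Prop) : Prop :=
  H_slice S /\ forall x, saturation S x.

(* slicing map f_S(gs) = gH (a representative g is chosen; well defined by (iii)) *)
Definition slicing_map (S : X -> Prop) (x : X) : GmodH :=
  proj (epsilon (inhabits (one gr)) (fun g => exists s, S s /\ act g s = x)).

Definition transporter (U V : X -> Prop) : G -> Prop :=
  fun g => exists u, U u /\ V (act g u).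

Definition thin (U V : X -> Prop) : Prop :=
  is_compact opG (closure opG (transporter U V)).

Definition small (U : X -> Prop) : Prop :=
  forall x, exists N, nbhd opX N x /\ thin N U.

Definition proper_space : Prop :=
  forall x, exists N, nbhd opX N x /\ small N.
End GroupStuff.

From Stdlib Require Import List Classical ClassicalEpsilon.
From Stdlib Require Import FunctionalExtensionality PropExtensionality ProofIrrelevance.

(* By (iii) and H(S) = S, f_S x = gH exactly when g^-1 x lies in S.
   (a) If x = g s is near x0, then g^-1 lies in the compact closure K of the transporter
   <N, S> of a small neighbourhood N of x0.  The points c of K with c^-1 H outside a given
   open set W of G/H satisfy c x0 outside the closed set S, so the tube lemma yields a
   neighbourhood of x0 on which f_S stays in W.  Openness follows from the continuity of
   g |-> g s, and closedness from the tube lemma applied to the compact set S.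
   (b) S = f^-1(eH) is closed because H is compact, and f(x) = gH gives g^-1 x in S.  If
   f(N) lies in V H with V contained in a compact set K, every g in <N, S> lies in the
   compact set H K^-1, so S is small. *)

Section OpenSets.
Context {T : Type} (op : (T -> Prop) -> Prop).
Hypothesis Htop : is_topology op.

Lemma open_ext (P Q : T -> Prop) : op P -> (forall x, P x <-> Q x) -> op Q.
Proof.
  intros HP HPQ.
  assert (E : P = Q).
  { apply functional_extensionality; intro x; apply propositional_extensionality; auto. }
  now subst.
Qed.

Lemma open_setT : op (fun _ => True).
Proof. apply Htop. Qed.

Lemma open_setI (U V : T -> Prop) : op U -> op V -> op (fun x => U x /\ V x).
Proof. intros; apply Htop; auto. Qed.

Lemma open_local (P : T -> Prop) :
  (forall x, P x -> exists U, op U /\ U x /\ forall y, U y -> P y) -> op P.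
Proof.
  intros Hloc.
  destruct Htop as [_ [_ Hunion]].
  set (I := {U : T -> Prop | op U /\ forall y, U y -> P y}).
  apply (open_ext (fun x => exists i : I, proj1_sig i x)).
  - apply Hunion. intros [U [HU HUP]]; exact HU.
  - intro x; split.
    + intros [[U [HU HUP]] Ux]; auto.
    + intros Px. destruct (Hloc x Px) as [U [HU [Ux HUP]]].
      exists (exist _ U (conj HU HUP)); exact Ux.
Qed.

Lemma open_finite_inter (I : Type) (F : I -> T -> Prop) (l : list I) :
  (forall i, In i l -> op (F i)) -> op (fun x => forall i, In i l -> F i x).
Proof.
  induction l as [|a l IH]; intros Hl.
  - apply (open_ext (fun _ => True)); [apply open_setT|].
    intro x; split; [intros _ i []|auto].
  - apply (open_ext (fun x => F a x /\ (forall i, In i l -> F i x))).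
    + apply open_setI; [apply Hl; left; auto|apply IH; intros; apply Hl; right; auto].
    + intro x; split.
      * intros [Ha Hrest] i [<-|Hi]; auto.
      * intros Hall; split; [apply Hall; left; auto|intros; apply Hall; right; auto].
Qed.

Lemma open_finite_union (I : Type) (F : I -> T -> Prop) (l : list I) :
  (forall i, op (F i)) -> op (fun x => exists i, In i l /\ F i x).
Proof.
  intros HF. destruct Htop as [_ [_ Hunion]].
  apply (open_ext (fun x => exists i : {i | In i l}, F (proj1_sig i) x)).
  - apply Hunion; auto.
  - intro x; split.
    + intros [[i Hi] Fx]; eauto.
    + intros [i [Hi Fx]]. exists (exist _ i Hi); exact Fx.
Qed.

Lemma closure_closed (A : T -> Prop) : is_closed op (closure op A).
Proof.
  apply open_local. intros x Hx.
  apply not_all_ex_not in Hx as [U HU].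
  apply imply_to_and in HU as [HU HU']. apply imply_to_and in HU' as [Ux HUA].
  exists U; split; [exact HU|split; [exact Ux|]].
  intros y Uy Hy. destruct (Hy U HU Uy) as [z [Uz Az]]. eauto.
Qed.

Lemma closure_min (A C : T -> Prop) :
  is_closed op C -> (forall x, A x -> C x) -> forall x, closure op A x -> C x.
Proof.
  intros HC HAC x Hx. apply NNPP; intro nC.
  destruct (Hx _ HC nC) as [y [nCy Ay]]. auto.
Qed.

Lemma subset_closure (A : T -> Prop) x : A x -> closure op A x.
Proof. intros Ax U _ Ux; eauto. Qed.

Lemma compact_ext (K L : T -> Prop) :
  is_compact op K -> (forall x, K x <-> L x) -> is_compact op L.
Proof.
  intros HK HKL I F HF Hcov.
  destruct (HK I F HF) as [l Hl]; [intros x Kx; apply Hcov, HKL, Kx|].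
  exists l. intros x Lx. apply Hl, HKL, Lx.
Qed.

Lemma compact_setI_closed (K C : T -> Prop) :
  is_compact op K -> is_closed op C -> is_compact op (fun x => K x /\ C x).
Proof.
  intros HK HC I F HF Hcov.
  destruct (HK (option I) (fun o x => match o with None => ~ C x | Some i => F i x end))
    as [l Hl].
  - intros [i|]; auto.
  - intros x Kx. destruct (classic (C x)) as [Cx|nCx].
    + destruct (Hcov x (conj Kx Cx)) as [i Fx]. exists (Some i); exact Fx.
    + exists None; exact nCx.
  - exists (flat_map (fun o => match o with None => nil | Some i => i :: nil end) l).
    intros x [Kx Cx]. destruct (Hl x Kx) as [[i|] [Hi Fx]]; [|contradiction].
    exists i; split; auto. apply in_flat_map. exists (Some i); split; [auto|left; auto].
Qed.

Lemma compact_closed (K : T -> Prop) : hausdorff op -> is_compact op K -> is_closed op K.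
Proof.
  intros Hh HK. apply open_local. intros y nKy.
  set (I := {UV : (T -> Prop) * (T -> Prop) |
              op (fst UV) /\ op (snd UV) /\ snd UV y /\ forall z, ~ (fst UV z /\ snd UV z)}).
  destruct (HK I (fun i => fst (proj1_sig i))) as [l Hl].
  - intros [UV [HU HUV]]; exact HU.
  - intros x Kx. assert (Hxy : x <> y) by (intro; subst; auto).
    destruct (Hh x y Hxy) as [U [V [HU [HV [Ux [Vy Hdisj]]]]]].
    exists (exist _ (U, V) (conj HU (conj HV (conj Vy Hdisj)))); exact Ux.
  - exists (fun z => forall i, In i l -> snd (proj1_sig i) z). repeat split.
    + apply open_finite_inter. intros [UV [HU [HV HUV]]] _; exact HV.
    + intros [UV [HU [HV [Vy Hdisj]]]] _; exact Vy.
    + intros z Hz Kz. destruct (Hl z Kz) as [i [Hi Uz]].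
      specialize (Hz i Hi). destruct i as [UV [HU [HV [Vy Hdisj]]]].
      exact (Hdisj z (conj Uz Hz)).
Qed.

Lemma compact_closure (A K : T -> Prop) : hausdorff op -> is_compact op K ->
  (forall x, A x -> K x) -> is_compact op (closure op A).
Proof.
  intros Hh HK HAK.
  apply (compact_ext (fun x => K x /\ closure op A x)).
  - apply compact_setI_closed; [exact HK|apply closure_closed].
  - intro x; split; [tauto|].
    intro Hx; split; [|exact Hx]. exact (closure_min A K (compact_closed K Hh HK) HAK x Hx).
Qed.
End OpenSets.

Lemma compact_image {A B : Type} (opA : (A -> Prop) -> Prop) (opB : (B -> Prop) -> Prop)
  (f : A -> B) (K : A -> Prop) :
  continuous opA opB f -> is_compact opA K ->
  is_compact opB (fun y => exists x, K x /\ y = f x).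
Proof.
  intros Hf HK I F HF Hcov.
  destruct (HK I (fun i x => F i (f x))) as [l Hl].
  - intro i; exact (Hf _ (HF i)).
  - intros x Kx. apply Hcov; eauto.
  - exists l. intros y [x [Kx ->]]. exact (Hl x Kx).
Qed.

Section Maps.
Context {A B C : Type}.
Variables (opA : (A -> Prop) -> Prop) (opB : (B -> Prop) -> Prop) (opC : (C -> Prop) -> Prop).
Variable f : A -> B -> C.
Hypothesis Hf : continuous2 opA opB opC f.

Lemma continuous2_fix_snd (b : B) : is_topology opA -> continuous opA opC (fun a => f a b).
Proof.
  intros HtA W HW. apply (open_local opA HtA). intros a Ha.
  destruct (Hf W HW a b Ha) as [U [V [HU [HV [Ua [Vb HUV]]]]]].
  exists U; split; [exact HU|split; [exact Ua|]].
  intros a' Ua'. exact (HUV a' b Ua' Vb).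
Qed.

Lemma continuous2_fix_fst (a : A) : is_topology opB -> continuous opB opC (f a).
Proof.
  intros HtB W HW. apply (open_local opB HtB). intros b Hb.
  destruct (Hf W HW a b Hb) as [U [V [HU [HV [Ua [Vb HUV]]]]]].
  exists V; split; [exact HV|split; [exact Vb|]].
  intros b' Vb'. exact (HUV a b' Ua Vb').
Qed.

Lemma continuous2_flip : continuous2 opB opA opC (fun b a => f a b).
Proof.
  intros W HW b a Hba.
  destruct (Hf W HW a b Hba) as [U [V [HU [HV [Ua [Vb HUV]]]]]].
  exists V, U; repeat split; auto.
  intros b' a' Vb' Ua'. exact (HUV a' b' Ua' Vb').
Qed.

Lemma tube_lemma (Q : B -> Prop) (a : A) (W : C -> Prop) :
  is_topology opA -> is_compact opB Q -> opC W -> (forall b, Q b -> W (f a b)) ->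
  exists U, opA U /\ U a /\ forall a' b, U a' -> Q b -> W (f a' b).
Proof.
  intros HtA HQ HW HaQ.
  set (I := {UV : (A -> Prop) * (B -> Prop) | opA (fst UV) /\ opB (snd UV) /\ fst UV a /\
              forall a' b', fst UV a' -> snd UV b' -> W (f a' b')}).
  destruct (HQ I (fun i => snd (proj1_sig i))) as [l Hl].
  - intros [UV [HU [HV HUV]]]; exact HV.
  - intros b Qb.
    destruct (Hf W HW a b (HaQ b Qb)) as [U [V [HU [HV [Ua [Vb HUV]]]]]].
    exists (exist _ (U, V) (conj HU (conj HV (conj Ua HUV)))); exact Vb.
  - exists (fun a' => forall i, In i l -> fst (proj1_sig i) a'). repeat split.
    + apply (open_finite_inter opA HtA). intros [UV [HU HUV]] _; exact HU.
    + intros [UV [HU [HV [Ua HUV]]]] _; exact Ua.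
    + intros a' b Ha' Qb. destruct (Hl b Qb) as [i [Hi Vb]].
      specialize (Ha' i Hi). destruct i as [UV [HU [HV [Ua HUV]]]].
      exact (HUV a' b Ha' Vb).
Qed.

Lemma compact_image2 (P : A -> Prop) (Q : B -> Prop) :
  is_topology opA -> is_topology opB -> is_topology opC ->
  is_compact opA P -> is_compact opB Q ->
  is_compact opC (fun z => exists a b, P a /\ Q b /\ z = f a b).
Proof.
  intros HtA HtB HtC HP HQ I F HF Hcov.
  set (J := {Ul : (A -> Prop) * list I | opA (fst Ul) /\
              forall a' b, fst Ul a' -> Q b -> exists i, In i (snd Ul) /\ F i (f a' b)}).
  destruct (HP J (fun j => fst (proj1_sig j))) as [L HL].
  - intros [Ul [HU HUl]]; exact HU.
  - intros a Pa.
    destruct (compact_image opB opC (f a) Q (continuous2_fix_fst a HtB) HQ I F HF) as [l Hl].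
    { intros z [b [Qb ->]]. apply Hcov. exists a, b; auto. }
    destruct (tube_lemma Q a _ HtA HQ (open_finite_union opC HtC I F l HF))
      as [U [HU [Ua HUl]]].
    { intros b Qb. apply Hl. exists b; auto. }
    exists (exist _ (U, l) (conj HU HUl)); exact Ua.
  - exists (flat_map (fun j => snd (proj1_sig j)) L).
    intros z [a [b [Pa [Qb ->]]]].
    destruct (HL a Pa) as [j [Hj Ua]].
    destruct j as [Ul [HU HUl]]; simpl in Ua.
    destruct (HUl a b Ua Qb) as [i [Hi Fi]].
    exists i; split; [|exact Fi].
    apply in_flat_map. eexists; split; [exact Hj|exact Hi].
Qed.
End Maps.

Lemma tube_lemma_fst {A B C : Type} (opA : (A -> Prop) -> Prop) (opB : (B -> Prop) -> Prop)
  (opC : (C -> Prop) -> Prop) (f : A -> B -> C) (P : A -> Prop) (b : B) (W : C -> Prop) :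
  continuous2 opA opB opC f ->
  is_topology opB -> is_compact opA P -> opC W -> (forall a, P a -> W (f a b)) ->
  exists V, opB V /\ V b /\ forall a b', P a -> V b' -> W (f a b').
Proof.
  intros Hf HtB HP HW HPb.
  destruct (tube_lemma opB opA opC _ (continuous2_flip opA opB opC f Hf) P b W HtB HP HW HPb)
    as [V [HV [Vb HVP]]].
  exists V; repeat split; auto.
Qed.

Section GroupLaws.
Context {G : Type} (gr : Group G).
Notation "a * b" := (mul gr a b).
Notation "a ^-1" := (inv gr a) (at level 3).
Notation e := (one gr).

Lemma mulgV a : a * a^-1 = e.
Proof.
  rewrite <- (mul1g gr (a * a^-1)), <- (mulVg gr (a^-1)) at 1.
  rewrite <- mulA, (mulA gr (a^-1) a (a^-1)), mulVg, mul1g. apply mulVg.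
Qed.

Lemma mulg1 a : a * e = a.
Proof. rewrite <- (mulVg gr a), mulA, mulgV, mul1g. reflexivity. Qed.

Lemma eq_invg_mul a b : a * b = e -> a = b^-1.
Proof. intro E. rewrite <- (mulg1 a), <- (mulgV b), mulA, E, mul1g. reflexivity. Qed.

Lemma invgK a : (a^-1)^-1 = a.
Proof. symmetry; apply eq_invg_mul, mulgV. Qed.

Lemma invMg a b : (a * b)^-1 = b^-1 * a^-1.
Proof.
  symmetry; apply eq_invg_mul.
  rewrite <- mulA, (mulA gr (a^-1) a b), mulVg, mul1g, mulVg. reflexivity.
Qed.

Lemma mulKVg a b : a * (a^-1 * b) = b.
Proof. rewrite mulA, mulgV, mul1g; reflexivity. Qed.

Variable H : G -> Prop.
Hypothesis Hsub : subgroup gr H.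

Lemma proj_eqP a b : proj gr H a = proj gr H b <-> H (a^-1 * b).
Proof.
  destruct Hsub as [H1 [HM HV]]. split.
  - intro E.
    assert (Ecoset : coset gr H a = coset gr H b) by exact (f_equal (@proj1_sig _ _) E).
    assert (Hb : coset gr H b b) by (unfold coset; rewrite mulVg; exact H1).
    rewrite <- Ecoset in Hb. exact Hb.
  - intro Hab. apply subset_eq_compat, functional_extensionality; intro y.
    apply propositional_extensionality. unfold coset. split; intro Hy.
    + replace (b^-1 * y) with ((a^-1 * b)^-1 * (a^-1 * y)); auto.
      rewrite invMg, invgK, <- mulA, mulKVg. reflexivity.
    + replace (a^-1 * y) with ((a^-1 * b) * (b^-1 * y)); auto.
      rewrite <- mulA, mulKVg. reflexivity.
Qed.

Lemma proj_eq1 a : proj gr H a = proj gr H e <-> H a.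
Proof.
  destruct Hsub as [H1 [HM HV]].
  rewrite proj_eqP, mulg1. split; intro Ha; [rewrite <- invgK|]; auto.
Qed.

Lemma proj_surj (z : GmodH gr H) : exists a, z = proj gr H a.
Proof. destruct z as [C [a E]]. exists a. apply subset_eq_compat. exact E. Qed.
End GroupLaws.

Section Actions.
Context {G : Type} (gr : Group G) {X : Type} (act : G -> X -> X).
Hypothesis act1 : forall x, act (one gr) x = x.
Hypothesis actM : forall g h x, act (mul gr g h) x = act g (act h x).

Lemma actK g x : act (inv gr g) (act g x) = x.
Proof. rewrite <- actM, mulVg, act1; reflexivity. Qed.

Lemma actKV g x : act g (act (inv gr g) x) = x.
Proof. rewrite <- actM, mulgV, act1; reflexivity. Qed.

Variable H : G -> Prop.
Hypothesis Hsub : subgroup gr H.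
Variable S : X -> Prop.
Hypothesis S_disjoint : forall g, ~ H g -> forall s, S s -> ~ S (act g s).

Lemma slicing_map_act g s : S s -> slicing_map gr H act S (act g s) = proj gr H g.
Proof.
  intros Ss. unfold slicing_map.
  destruct (epsilon_spec (inhabits (one gr)) (fun g' => exists s', S s' /\ act g' s' = act g s)
     (ex_intro _ g (ex_intro _ s (conj Ss eq_refl)))) as [s' [Ss' E]].
  set (g' := epsilon _ _) in *.
  apply (proj_eqP gr H Hsub). apply NNPP; intro nH.
  apply (S_disjoint _ nH s Ss). rewrite actM, <- E, actK. exact Ss'.
Qed.

Hypothesis S_H_stable : forall x, H_saturation H act S x <-> S x.
Hypothesis S_global : forall x, saturation act S x.

Lemma slicing_mapP x g : slicing_map gr H act S x = proj gr H g <-> S (act (inv gr g) x).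
Proof.
  split.
  - destruct (S_global x) as [k [s [Ss ->]]]. rewrite slicing_map_act by exact Ss.
    intro E. apply (proj_eqP gr H Hsub) in E.
    apply S_H_stable. exists (mul gr (inv gr g) k), s. split; [|split; [exact Ss|]].
    + destruct Hsub as [_ [_ HV]]. apply HV in E. rewrite invMg, invgK in E. exact E.
    + rewrite actM. reflexivity.
  - intro Hs. rewrite <- (actKV g x). apply slicing_map_act, Hs.
Qed.
End Actions.

Section SlicingMap.
Context {G : Type} (gr : Group G) (opG : (G -> Prop) -> Prop).
Context {X : Type} (opX : (X -> Prop) -> Prop) (act : G -> X -> X).
Hypothesis HtG : is_topology opG.
Hypothesis Hinv : continuous opG opG (inv gr).
Hypothesis HtX : is_topology opX.
Hypothesis Hact : is_action gr opG opX act.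
Variable H : G -> Prop.
Hypothesis Hsub : subgroup gr H.
Variable S : X -> Prop.
Hypothesis HS : global_H_slice H opX act S.

Let fS := slicing_map gr H act S.

Let act_cont : continuous2 opG opX opX act := proj1 Hact.
Let act1 : forall x, act (one gr) x = x := proj1 (proj2 Hact).
Let actM : forall g h x, act (mul gr g h) x = act g (act h x) := proj2 (proj2 Hact).
Let act_K := actK gr act act1 actM.
Let act_KV := actKV gr act act1 actM.

Lemma global_slice_closed : is_closed opX S.
Proof.
  destruct HS as [[_ [[C [HC HSC]] _]] Hglob].
  apply (open_ext opX (fun x => ~ C x) _ HC). intro x. rewrite (HSC x (Hglob x)). tauto.
Qed.

Lemma global_slicing_mapP x g : fS x = proj gr H g <-> S (act (inv gr g) x).
Proof.
  destruct HS as [[Hstable [_ [Hdisj _]]] Hglob].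
  exact (slicing_mapP gr act act1 actM H Hsub S Hdisj Hstable Hglob x g).
Qed.

Lemma global_slicing_map_act g s : S s -> fS (act g s) = proj gr H g.
Proof. intro Ss. apply global_slicing_mapP. rewrite act_K. exact Ss. Qed.

Lemma slicing_map_continuous :
  small opG opX act S -> continuous opX (@quot_open G gr opG H) fS.
Proof.
  intros Hsmall V HV. apply (open_local opX HtX). intros x0 Vx0.
  destruct (Hsmall x0) as [N [[U0 [HU0 [U0x0 U0N]]] Hthin]].
  set (W := fun c => V (proj gr H (inv gr c))).
  set (K := closure opG (transporter act N S)).
  assert (Hfar : is_compact opG (fun c => K c /\ ~ W c)).
  { apply compact_setI_closed; [exact Hthin|].
    apply (open_ext opG W); [exact (Hinv _ HV)|].
    intro c; split; [auto|apply NNPP]. }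
  destruct (tube_lemma_fst opG opX opX act (fun c => K c /\ ~ W c) x0 (fun x => ~ S x)
              act_cont HtX Hfar global_slice_closed) as [M [HM [Mx0 HMfar]]].
  { intros c [_ nWc] Scx. apply nWc.
    assert (E : fS x0 = proj gr H (inv gr c)).
    { apply global_slicing_mapP. rewrite invgK. exact Scx. }
    unfold W. rewrite <- E. exact Vx0. }
  exists (fun x => U0 x /\ M x).
  split; [apply (open_setI opX HtX); auto|split; [auto|]].
  intros x [U0x Mx]. destruct (proj2 HS x) as [g [s [Ss ->]]].
  rewrite global_slicing_map_act by exact Ss.
  assert (Kg : K (inv gr g)).
  { apply subset_closure. exists (act g s). split; [exact (U0N _ U0x)|]. rewrite act_K; exact Ss. }
  destruct (classic (W (inv gr g))) as [Wg|nWg].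
  - unfold W in Wg. rewrite invgK in Wg. exact Wg.
  - exfalso. apply (HMfar _ _ (conj Kg nWg) Mx). rewrite act_K. exact Ss.
Qed.

Lemma slicing_map_open : open_map opX (@quot_open G gr opG H) fS.
Proof.
  intros U HU. apply (open_local opG HtG). intros g0 [x0 [Ux0 E]].
  apply global_slicing_mapP in E.
  exists (fun g => U (act g (act (inv gr g0) x0))). split; [|split].
  - exact (continuous2_fix_snd opG opX opX act act_cont _ HtG U HU).
  - rewrite act_KV; exact Ux0.
  - intros g Ug. exists (act g (act (inv gr g0) x0)).
    split; [exact Ug|]. apply global_slicing_map_act, E.
Qed.

Lemma slicing_map_closed :
  is_compact opX S -> closed_map opX (@quot_open G gr opG H) fS.
Proof.
  intros HScomp D HD. apply (open_local opG HtG). intros g0 Hg0.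
  destruct (tube_lemma opG opX opX act act_cont S g0 (fun x => ~ D x) HtG HScomp HD)
    as [U [HU [Ug0 HUS]]].
  { intros s Ss Ds. apply Hg0. exists (act g0 s). split; [exact Ds|].
    apply global_slicing_map_act, Ss. }
  exists U. split; [exact HU|split; [exact Ug0|]].
  intros g Ug [x [Dx E]]. apply global_slicing_mapP in E.
  apply (HUS _ _ Ug E). rewrite act_KV. exact Dx.
Qed.
End SlicingMap.

Section EquivariantMap.
Context {G : Type} (gr : Group G) (opG : (G -> Prop) -> Prop).
Context {X : Type} (opX : (X -> Prop) -> Prop) (act : G -> X -> X).
Hypothesis HtG : is_topology opG.
Hypothesis HhG : hausdorff opG.
Hypothesis Hgroup : topological_group gr opG.
Hypothesis Hlc : locally_compact opG.
Hypothesis HtX : is_topology opX.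
Hypothesis Hact : is_action gr opG opX act.
Variable H : G -> Prop.
Hypothesis Hsub : subgroup gr H.
Hypothesis HHc : is_compact opG H.

Let Hmul : continuous2 opG opG opG (mul gr) := proj1 Hgroup.
Let Hinv : continuous opG opG (inv gr) := proj2 Hgroup.

Lemma proj_open : open_map opG (@quot_open G gr opG H) (proj gr H).
Proof.
  intros V HV. apply (open_local opG HtG). intros g [v [Vv E]].
  apply (proj_eqP gr H Hsub) in E.
  exists (fun g' => V (mul gr g' (mul gr (inv gr g) v))). split; [|split].
  - exact (continuous2_fix_snd opG opG opG (mul gr) Hmul _ HtG V HV).
  - rewrite mulKVg. exact Vv.
  - intros g' Vg'. eexists; split; [exact Vg'|]. apply (proj_eqP gr H Hsub).
    rewrite invMg, <- mulA, mulVg, mulg1, invMg, invgK. exact E.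
Qed.

Variable f : X -> GmodH gr H.
Hypothesis Hfc : continuous opX (@quot_open G gr opG H) f.
Hypothesis Heqv : equivariant act f.

Let S := fun x => f x = proj gr H (one gr).

Lemma fiber_act g s : S s -> f (act g s) = proj gr H g.
Proof. intro Ss. rewrite (Heqv g s (one gr) Ss), mulg1. reflexivity. Qed.

Lemma fiber_decomp x : exists g s, S s /\ x = act g s.
Proof.
  destruct (proj_surj gr H (f x)) as [g Eg]. exists g, (act (inv gr g) x). split.
  - unfold S. rewrite (Heqv _ _ _ Eg), mulVg. reflexivity.
  - rewrite (actKV gr act (proj1 (proj2 Hact)) (proj2 (proj2 Hact))). reflexivity.
Qed.

Lemma fiber_disjoint g : ~ H g -> forall s, S s -> ~ S (act g s).
Proof.
  intros nHg s Ss Sgs. apply nHg, (proj_eq1 gr H Hsub).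
  rewrite <- (fiber_act g s Ss). exact Sgs.
Qed.

Lemma fiber_closed : is_closed opX S.
Proof.
  apply (Hfc (fun z => z <> proj gr H (one gr))).
  apply (open_ext opG (fun g => ~ H g)); [exact (compact_closed opG HtG H HhG HHc)|].
  intro g. rewrite (proj_eq1 gr H Hsub). reflexivity.
Qed.

Lemma fiber_global_slice : global_H_slice H opX act S.
Proof.
  split; [split; [|split; [|split]]|].
  - intro x; split.
    + intros [h [s [Hh [Ss ->]]]]. unfold S.
      rewrite fiber_act by exact Ss. apply (proj_eq1 gr H Hsub), Hh.
    + intro Sx. exists (one gr), x. rewrite (proj1 (proj2 Hact)).
      split; [apply Hsub|split; [exact Sx|reflexivity]].
  - exists S. split; [exact fiber_closed|tauto].
  - exact fiber_disjoint.
  - apply (open_ext opX (fun _ => True)); [exact (open_setT opX HtX)|].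
    intro x; split; [intros _; apply fiber_decomp|auto].
  - exact fiber_decomp.
Qed.

Lemma fiber_small : small opG opX act S.
Proof.
  intros x0. destruct (proj_surj gr H (f x0)) as [k Ek].
  destruct (Hlc k) as [K [HKc [V [HV [Vk VK]]]]].
  set (N := fun x => exists v, V v /\ proj gr H v = f x).
  exists N. split.
  - exists N. split; [exact (Hfc _ (proj_open V HV))|].
    split; [exists k; auto|auto].
  - apply (compact_closure opG HtG _
             (fun z => exists a b, H a /\ (exists c, K c /\ b = inv gr c) /\ z = mul gr a b) HhG).
    + apply (compact_image2 opG opG opG (mul gr) Hmul); auto.
      exact (compact_image opG opG (inv gr) K Hinv HKc).
    + intros g [u [[v [Vv Ev]] Sgu]].
      assert (Hgv : H (mul gr g v)).
      { apply (proj_eq1 gr H Hsub). rewrite <- Sgu. symmetry. exact (Heqv g u v (eq_sym Ev)). }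
      exists (mul gr g v), (inv gr v). split; [exact Hgv|split; [exists v; auto|]].
      rewrite <- mulA, mulgV, mulg1. reflexivity.
Qed.

Lemma slicing_map_fiber : slicing_map gr H act S = f.
Proof.
  apply functional_extensionality. intro x. destruct (fiber_decomp x) as [g [s [Ss ->]]].
  rewrite (slicing_map_act gr act (proj1 (proj2 Hact)) (proj2 (proj2 Hact)) H Hsub S
             fiber_disjoint g s Ss).
  symmetry. exact (fiber_act g s Ss).
Qed.
End EquivariantMap.

Theorem theorem2p2 :
  forall (G : Type) (gr : Group G) (opG : (G -> Prop) -> Prop),
    is_topology opG -> hausdorff opG -> completely_regular opG ->
    topological_group gr opG -> locally_compact opG ->
  forall (X : Type) (opX : (X -> Prop) -> Prop) (act : G -> X -> X),
    is_topology opX -> hausdorff opX -> completely_regular opX ->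
    is_action gr opG opX act ->
    proper_space opG opX act ->
  forall (H : G -> Prop),
    subgroup gr H -> is_compact opG H ->
    (* (a) *)
    (forall S : X -> Prop,
        global_H_slice H opX act S -> small opG opX act S ->
        continuous opX (@quot_open G gr opG H) (slicing_map gr H act S) /\
        open_map opX (@quot_open G gr opG H) (slicing_map gr H act S) /\
        (is_compact opX S ->
           closed_map opX (@quot_open G gr opG H) (slicing_map gr H act S))) /\
    (* (b) *)
    (forall f : X -> GmodH gr H,
        continuous opX (@quot_open G gr opG H) f ->
        @equivariant G gr H X act f ->
        let S := fun x => f x = proj gr H (one gr) in
        global_H_slice H opX act S /\
        small opG opX act S /\
        slicing_map gr H act S = f).
Proof.
  intros G gr opG HtG HhG _ Hgroup Hlc X opX act HtX _ _ Hact _ H Hsub HHc. split.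
  - intros S HS Hsmall. split; [|split].
    + exact (slicing_map_continuous gr opG opX act (proj2 Hgroup) HtX Hact H Hsub S HS Hsmall).
    + exact (slicing_map_open gr opG opX act HtG Hact H Hsub S HS).
    + exact (slicing_map_closed gr opG opX act HtG Hact H Hsub S HS).
  - intros f Hfc Heqv S. split; [|split].
    + exact (fiber_global_slice gr opG opX act HtG HhG HtX Hact H Hsub HHc f Hfc Heqv).
    + exact (fiber_small gr opG opX act HtG HhG Hgroup Hlc H Hsub HHc f Hfc Heqv).
    + exact (slicing_map_fiber gr opG opX act Hact H Hsub f Heqv).
Qed.
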